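(* Let $k$ be a field, $\mathsf{E}$ a locally finite $k$-linear category, and $\mathfrak{P}$ a nonzero left $\mathcal{C}_\mathsf{E}$-contramodule. Then the left $\mathsf{E}$-module $\Theta_\mathsf{E}(\mathfrak{P})$ has a proper big $\mathsf{E}$-submodule.
   Context: A small $k$-linear category $\mathsf{E}$ has $k$-vector spaces $\operatorname{Hom}_\mathsf{E}(x,y)$, $k$-bilinear associative composition and identities with $\mathrm{id}_x\ne0$. A left $\mathsf{E}$-module is a $k$-linear functor $\mathsf{E}\to k\text{-Vect}$. Write $x\preceq y$ if there are $n\ge1$ and objects $x=z_0,\dots,z_n=y$ with $\operatorname{Hom}_\mathsf{E}(z_{i-1},z_i)\neq0$ for all $i$. $\mathsf{E}$ is locally finite if all Hom spaces are finite-dimensional and every $\{z:x\preceq z\preceq y\}$ is finite. A left $\mathsf{E}$-module $T$ is contrafinite if for every object $y$ there is a finite set of objects $A$ such that the action map $\operatorname{Hom}_\mathsf{E}(x,y)\otimes_kT(x)\to T(y)$ vanishes for all $x\notin A$; a submodule $Q\subseteq P$ is big if $P/Q$ is contrafinite. $\mathcal{C}_\mathsf{E}=\bigoplus_{x,y}\mathcal{C}^{x,y}$, $\mathcal{C}^{x,y}=\operatorname{Hom}_\mathsf{E}(x,y)^*$; counit zero on $\mathcal{C}^{x,y}$ for $x\ne y$, evaluation at $\mathrm{id}_x$ on $\mathcal{C}^{x,x}$; comultiplication $\mathcal{C}^{x,y}\to\bigoplus_z\mathcal{C}^{x,z}\otimes\mathcal{C}^{z,y}$ dual to composition $g\otimes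 h\mapsto hg$. A left contramodule over a coalgebra $(\mathcal{C},\mu,\epsilon)$ is a space $\mathfrak{P}$ with $\pi:\operatorname{Hom}_k(\mathcal{C},\mathfrak{P})\to\mathfrak{P}$ such that $\pi(c\mapsto\epsilon(c)p)=p$ and, under $\operatorname{Hom}_k(\mathcal{C},\operatorname{Hom}_k(\mathcal{C},\mathfrak{P}))\cong\operatorname{Hom}_k(\mathcal{C}\otimes\mathcal{C},\mathfrak{P})$, $f\mapsto(c'\otimes c''\mapsto f(c'')(c'))$, $\pi(c\mapsto\pi(f(c)))=\pi(f\circ\mu)$. Set $\varphi\cdot p=\pi(c\mapsto\varphi(c)p)$. With $e_x$ evaluation at $\mathrm{id}_x$ on $\mathcal{C}^{x,x}$ (zero elsewhere) and $\mathrm{ev}_f$, for $f\in\operatorname{Hom}_\mathsf{E}(x,y)$, evaluation at $f$ on $\mathcal{C}^{x,y}$ (zero elsewhere): $\Theta_\mathsf{E}(\mathfrak{P})(x)=e_x\cdot\mathfrak{P}$ (with $\mathfrak{P}\cong\prod_xe_x\cdot\mathfrak{P}$), $f$ acting by $p\mapsto\mathrm{ev}_f\cdot p$. *)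

From HB Require Import structures.
From mathcomp Require Import all_boot all_order all_algebra.
From mathcomp Require Import boolp classical_sets fsbigop.
Set Implicit Arguments. Unset Strict Implicit. Unset Printing Implicit Defensive.
Import GRing.Theory.
Local Open Scope ring_scope.

(* Objects form a (choice) type, the Hom spaces
   are k-vector spaces; we use vectType (finite-dimensional spaces), since the
   statement only concerns locally finite categories, whose Hom spaces are
   finite-dimensional. *)
Record klinCat (k : fieldType) := KLinCat {
  Obj : choiceType;
  Hom : Obj -> Obj -> vectType k;
  comp : forall x y z, Hom y z -> Hom x y -> Hom x z;
  idm : forall x, Hom x x;
  compDl : forall x y z (a : k) (h1 h2 : Hom y z) (g : Hom x y),
      comp (a *: h1 + h2) g = a *: comp h1 g + comp h2 g;
  compDr : forall x y z (a : k) (h : Hom y z) (g1 g2 : Hom x y),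
      comp h (a *: g1 + g2) = a *: comp h g1 + comp h g2;
  compA : forall x y z w (h : Hom z w) (g : Hom y z) (f : Hom x y),
      comp h (comp g f) = comp (comp h g) f;
  comp1l : forall x y (g : Hom x y), comp (idm y) g = g;
  comp1r : forall x y (g : Hom x y), comp g (idm x) = g;
  idm_neq0 : forall x, idm x != 0
}.
Arguments comp {k} _ {x y z}.
Arguments idm {k} _ x.

Section Defs.
Variables (k : fieldType) (E : klinCat k).
Local Notation Obj := (@Obj k E).
Local Notation Hom := (@Hom k E).

Definition hom_nz (x y : Obj) : Prop := exists g : Hom x y, g != 0.

Definition preceq (x y : Obj) : Prop :=
  exists (n : nat) (zs : nat -> Obj),
    [/\ (0 < n)%N, zs 0%N = x, zs n = y &
        forall i, (i < n)%N -> hom_nz (zs i) (zs i.+1)].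

Definition locally_finite : Prop :=
  forall x y : Obj, exists s : seq Obj,
    forall z, preceq x z -> preceq z y -> z \in s.

Definition dualC (x y : Obj) := 'Hom(Hom x y, k^o).

(* Hom_k(C_E, V) = prod_{x,y} Hom_k(C^{x,y}, V): families of maps,
   required to be linear by [lin_fam]. *)
Definition fam (V : lmodType k) := forall x y : Obj, dualC x y -> V.

Definition linear_fun (U V : lmodType k) (f : U -> V) : Prop :=
  forall (a : k) (u v : U), f (a *: u + v) = a *: f u + f v.

Definition lin_fam (V : lmodType k) (F : fam V) : Prop :=
  forall x y, linear_fun (F x y).

Definition fam_lin (V : lmodType k) (a : k) (F G : fam V) : fam V :=
  fun x y c => a *: F x y c + G x y c.

Definition castHom (x y u v : Obj) (e1 : x = u) (e2 : y = v) (f : Hom x y)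
  : Hom u v :=
  match e1 in _ = u' return Hom u' v with
  | erefl => match e2 in _ = v' return Hom x v' with erefl => f end
  end.

(* the element of C_E^* = prod Hom(u,v) which is f on (x,y) and 0 elsewhere *)
Definition point (x y : Obj) (f : Hom x y) (u v : Obj) : Hom u v :=
  match x =P u, y =P v with
  | ReflectT e1, ReflectT e2 => castHom e1 e2 f
  | _, _ => 0
  end.

(* counit: zero on C^{u,v}, u <> v, evaluation at id_u on C^{u,u} *)
Definition counit (u v : Obj) (c : dualC u v) : k := c (point (idm E u) u v).

Definition dbasis (x y : Obj) (i : 'I_(\dim (fullv : {vspace Hom x y})))
  : dualC x y :=
  linfun (fun g : Hom x y => (coord (vbasis fullv) i g : k^o)).

Definition bas (x y : Obj) (i : 'I_(\dim (fullv : {vspace Hom x y}))) : Hom x y :=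
  tnth (vbasis fullv) i.

(* (f o mu)(c) for c in C^{x,y}, where f in Hom_k(C, Hom_k(C, V)) is
   regarded as the map C (x) C -> V, c' (x) c'' |-> f(c'')(c'), and
   mu(c) = sum_z sum_{i,j} c(h_j g_i) g_i^* (x) h_j^*  (dual to composition,
   g_i, h_j bases of Hom(x,z), Hom(z,y)); the sum over z is finitely
   supported (direct sum). *)
Definition comult_apply (V : lmodType k) (f : forall x y, dualC x y -> fam V)
    (x y : Obj) (c : dualC x y) : V :=
  \sum_(z \in [set: Obj])
    \sum_(i < \dim (fullv : {vspace Hom x z}))
      \sum_(j < \dim (fullv : {vspace Hom z y}))
        ((c (comp E (bas j) (bas i)) : k) *: f z y (dbasis j) x z (dbasis i)).

Record contramodule := Contramodule {
  ccarrier :> lmodType k;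
  cpi : fam ccarrier -> ccarrier;
  cpi_lin : forall (a : k) (F G : fam ccarrier), lin_fam F -> lin_fam G ->
      cpi (fam_lin a F G) = a *: cpi F + cpi G;
  cpi_counit : forall p : ccarrier,
      cpi (fun u v c => counit c *: p) = p;
  cpi_comult : forall f : forall x y, dualC x y -> fam ccarrier,
      (forall x y, forall (a : k) c1 c2,
         f x y (a *: c1 + c2) = fam_lin a (f x y c1) (f x y c2)) ->
      (forall x y c, lin_fam (f x y c)) ->
      cpi (fun x y c => cpi (f x y c)) = cpi (comult_apply f)
}.

Variable P : contramodule.

Definition cact (phi : forall u v : Obj, Hom u v) (p : P) : P :=
  cpi (fun u v c => (c (phi u v) : k) *: p).

(* Theta_E(P)(x) = e_x . P, as a subset of P *)
Definition Theta (x : Obj) (p : P) : Prop :=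
  exists q : P, p = cact (point (idm E x)) q.

Definition Theta_act (x y : Obj) (f : Hom x y) (p : P) : P := cact (point f) p.

Definition is_submodule (Q : Obj -> P -> Prop) : Prop :=
  (forall x p, Q x p -> Theta x p) /\
  (forall x, Q x 0) /\
  (forall x (a : k) p q, Q x p -> Q x q -> Q x (a *: p + q)) /\
  (forall x y (f : Hom x y) p, Q x p -> Q y (Theta_act f p)).

(* Q is big: Theta_E(P)/Q is contrafinite, i.e. for every y there is a finite
   set A of objects such that for x notin A the action map
   Hom(x,y) (x) Theta(x)/Q(x) -> Theta(y)/Q(y) vanishes. *)
Definition big_submodule (Q : Obj -> P -> Prop) : Prop :=
  forall y : Obj, exists A : seq Obj, forall x : Obj, x \notin A ->
    forall (f : Hom x y) (p : P), Theta x p -> Q y (Theta_act f p).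

Definition proper_submodule (Q : Obj -> P -> Prop) : Prop :=
  exists x p, Theta x p /\ ~ Q x p.

End Defs.

(* Let Q(y) consist of the finite sums of elements ev_f . p of Theta(y) with
   f : x -> y, p in Theta(x) and not y <= x.  It is a submodule, and it is big:
   a nonzero f : x -> y with y <= x forces x into the finite interval [y, y].
   If Q were not proper, every q0 in Theta(y0) could be decomposed through Q
   again and again; after n steps q0 is written through arrows factoring over
   strictly descending chains of length n, which local finiteness rules out
   once n exceeds the size of the interval [x, y0].  Hence the families
   F_n(c) = sum c(f) p of the n-th decomposition add up to locally finite
   sums, and contraassociativity gives pi(sum_n F_n) = pi(sum_n F_(n+1)),
   i.e. q0 = pi(F_0) = 0.  Then e_y . p = 0 for every y, so p = 0 by
   counitality: a Nakayama lemma for contramodules. *)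

From Pilot Require Import Defs.
From HB Require Import structures.
From mathcomp Require Import all_boot all_order all_algebra.
From mathcomp Require Import boolp classical_sets fsbigop.
Set Implicit Arguments. Unset Strict Implicit. Unset Printing Implicit Defensive.
Import GRing.Theory.
Local Open Scope ring_scope.

Lemma sum_nat_widen (V : nmodType) (F : nat -> V) m n : (m <= n)%N ->
  (forall i, (m <= i)%N -> F i = 0) -> \sum_(0 <= i < m) F i = \sum_(0 <= i < n) F i.
Proof.
move=> le_mn F0; rewrite (big_cat_nat (leq0n m) le_mn) //= [X in _ + X]big1_seq ?addr0 //.
by move=> i /andP[_]; rewrite mem_index_iota => /andP[/F0].
Qed.

Section LinearFun.
Variables (k : fieldType) (U V : lmodType k).
Implicit Types f : U -> V.

Lemma linear_fun0 f : linear_fun f -> f 0 = 0.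
Proof.
move=> lin_f; have := lin_f 1 0 0; rewrite !scale1r addr0 => /eqP.
by rewrite -subr_eq subrr eq_sym => /eqP.
Qed.

Lemma linear_funZ f (lin_f : linear_fun f) a u : f (a *: u) = a *: f u.
Proof. by rewrite -[a *: u]addr0 lin_f linear_fun0 ?addr0. Qed.

Lemma linear_funD f (lin_f : linear_fun f) u v : f (u + v) = f u + f v.
Proof. by have := lin_f 1 u v; rewrite !scale1r. Qed.

Lemma linear_fun_sum f (lin_f : linear_fun f) I (r : seq I) (F : I -> U) :
  f (\sum_(i <- r) F i) = \sum_(i <- r) f (F i).
Proof.
apply: (big_rec2 (fun u v => f u = v)); first exact: linear_fun0.
by move=> i u v _ <-; rewrite linear_funD.
Qed.

Lemma eval_linear_fun (W : vectType k) (h : W) (p : V) :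
  linear_fun (fun c : 'Hom(W, k^o) => (c h : k) *: p).
Proof. by move=> a c1 c2; rewrite add_lfunE scale_lfunE scalerDl scalerA. Qed.

Lemma scale_linear_fun (b : k) f : linear_fun f -> linear_fun (fun u => b *: f u).
Proof. by move=> lin_f a u v; rewrite lin_f scalerDr !scalerA mulrC. Qed.

Lemma sum_linear_fun I (r : seq I) (F : I -> U -> V) :
  (forall i, linear_fun (F i)) -> linear_fun (fun u => \sum_(i <- r) F i u).
Proof.
move=> lin_F a u v; rewrite scaler_sumr -big_split.
by apply: eq_bigr => i _; rewrite lin_F.
Qed.

End LinearFun.

Section Category.
Variables (k : fieldType) (E : klinCat k).
Local Notation Obj := (@Defs.Obj k E).
Local Notation Hom := (@Defs.Hom k E).
Local Notation comp := (@Defs.comp k E).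
Local Notation point := (@Defs.point k E).
Implicit Types x y z u v : Obj.

Lemma comp_linear_l x y z (g : Hom x y) : linear_fun (fun h : Hom y z => comp h g).
Proof. by move=> a h1 h2; rewrite compDl. Qed.

Lemma comp_linear_r x y z (h : Hom y z) : linear_fun (fun g : Hom x y => comp h g).
Proof. by move=> a g1 g2; rewrite compDr. Qed.

Lemma comp0l x y z (g : Hom x y) : comp (0 : Hom y z) g = 0.
Proof. exact: linear_fun0 (@comp_linear_l _ _ z g). Qed.

Lemma comp0r x y z (h : Hom y z) : comp h (0 : Hom x y) = 0.
Proof. exact: linear_fun0 (@comp_linear_r x _ _ h). Qed.

Lemma compZl x y z a (h : Hom y z) (g : Hom x y) : comp (a *: h) g = a *: comp h g.
Proof. exact: (linear_funZ (@comp_linear_l _ _ z g) a h). Qed.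

Lemma compZr x y z a (h : Hom y z) (g : Hom x y) : comp h (a *: g) = a *: comp h g.
Proof. exact: (linear_funZ (@comp_linear_r x _ _ h) a g). Qed.

Lemma comp_suml x y z I (r : seq I) (F : I -> Hom y z) (g : Hom x y) :
  comp (\sum_(i <- r) F i) g = \sum_(i <- r) comp (F i) g.
Proof. exact: (linear_fun_sum (@comp_linear_l _ _ z g) r F). Qed.

Lemma comp_sumr x y z I (r : seq I) (F : I -> Hom x y) (h : Hom y z) :
  comp h (\sum_(i <- r) F i) = \sum_(i <- r) comp h (F i).
Proof. exact: (linear_fun_sum (@comp_linear_r x _ _ h) r F). Qed.

Lemma point_self x y (f : Hom x y) : point f x y = f.
Proof.
rewrite /Defs.point; case: eqP => [e1|/(_ erefl)//]; case: eqP => [e2|/(_ erefl)//].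
by rewrite (eq_irrelevance e1 erefl) (eq_irrelevance e2 erefl).
Qed.

Lemma point_other x y (f : Hom x y) u v : (x != u) || (y != v) -> point f u v = 0.
Proof. by rewrite /Defs.point; case: eqP => [e1|//]; case: eqP => [e2|//]; subst. Qed.

Lemma point0 x y u v : point (0 : Hom x y) u v = 0.
Proof. by rewrite /Defs.point; case: eqP => [e1|//]; case: eqP => [e2|//]; subst. Qed.

Lemma sum_dbasis_comp (V : lmodType k) x z y (h : Hom z y) (g : Hom x z)
    (c : dualC x y) (p : V) :
  \sum_(i < \dim (fullv : {vspace Hom x z})) \sum_(j < \dim (fullv : {vspace Hom z y}))
    (c (comp (bas j) (bas i)) : k) *: ((dbasis j h : k) *: ((dbasis i g : k) *: p))
  = (c (comp h g) : k) *: p.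
Proof.
rewrite {2}(coord_vbasis (memvf h)) {2}(coord_vbasis (memvf g)).
rewrite comp_suml linear_sum scaler_suml exchange_big /=; apply: eq_bigr => j _.
rewrite comp_sumr linear_sum scaler_suml /=; apply: eq_bigr => i _.
rewrite compZl compZr !linearZ /= /dbasis !lfunE /= /bas !(tnth_nth 0).
by rewrite !scalerA.
Qed.

Lemma dim_Hom_eq0 x y : ~ hom_nz x y -> \dim (fullv : {vspace Hom x y}) = 0%N.
Proof.
move=> Hxy; apply/eqP; rewrite dimv_eq0; apply/eqP/vspaceP => g.
rewrite memvf memv0; apply/esym/eqP; apply: contrapT => g_neq0.
by apply: Hxy; exists g; apply/eqP.
Qed.

Lemma hom_nz_preceq x y : hom_nz x y -> preceq x y.
Proof. by move=> Hxy; exists 1%N, (fun i => if i is 0%N then x else y); split=> // -[]. Qed.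

Lemma preceq_refl x : preceq x x.
Proof. by apply: hom_nz_preceq; exists (idm E x); exact: idm_neq0. Qed.

Lemma preceq_trans x y z : preceq x y -> preceq y z -> preceq x z.
Proof.
move=> [m [xs [m_gt0 xs0 xsm Hxs]]] [n [ys [_ ys0 ysn Hys]]].
pose zs i := if (i <= m)%N then xs i else ys (i - m)%N.
have zsR i : (m <= i)%N -> zs i = ys (i - m)%N.
  rewrite /zs => le_mi; case: ifP => // le_im.
  have -> : i = m by apply/eqP; rewrite eqn_leq le_im le_mi.
  by rewrite subnn xsm ys0.
exists (m + n)%N, zs; split.
- by rewrite addn_gt0 m_gt0.
- by rewrite /zs leq0n.
- by rewrite zsR ?leq_addr // addKn.
move=> i lt_i_mn; case: (ltnP i m) => [lt_im|le_mi].
  by rewrite /zs (ltnW lt_im) lt_im; exact: Hxs.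
rewrite !zsR ?(leq_trans le_mi) // subSn //; apply: Hys.
by rewrite ltn_subLR // addnC.
Qed.

End Category.

Section LocallyFinite.
Variables (k : fieldType) (E : klinCat k).
Local Notation Obj := (@Defs.Obj k E).
Local Notation Hom := (@Defs.Hom k E).
Local Notation comp := (@Defs.comp k E).
Local Notation point := (@Defs.point k E).
Implicit Types x y z u v : Obj.
Hypothesis lfE : locally_finite E.

Definition interval_enum x y : seq Obj := undup (sval (cid (lfE x y))).

Lemma interval_enum_uniq x y : uniq (interval_enum x y).
Proof. exact: undup_uniq. Qed.

Lemma mem_interval_enum x y z : preceq x z -> preceq z y -> z \in interval_enum x y.
Proof. by move=> Hxz Hzy; rewrite mem_undup; apply: (svalP (cid (lfE x y))). Qed.

Lemma comult_applyE (V : lmodType k) (f : forall x y, dualC x y -> fam E V) x y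
    (c : dualC x y) :
  comult_apply f c = \sum_(z <- interval_enum x y)
    \sum_(i < \dim (fullv : {vspace Hom x z})) \sum_(j < \dim (fullv : {vspace Hom z y}))
      (c (comp (bas j) (bas i)) : k) *: f z y (dbasis j) x z (dbasis i).
Proof.
rewrite /comult_apply (fsbigE (interval_enum x y)) ?interval_enum_uniq //; last first.
  move=> z _ z_notin.
  have [Hxz|/dim_Hom_eq0 dim0] := pselect (hom_nz x z); last first.
    by rewrite big1 // => -[i lt_i] _; exfalso; rewrite dim0 in lt_i.
  have [Hzy|/dim_Hom_eq0 dim0] := pselect (hom_nz z y); last first.
    by rewrite big1 // => i _; rewrite big1 // => -[j lt_j] _; exfalso; rewrite dim0 in lt_j.
  by case/negP: z_notin; apply: mem_interval_enum; apply: hom_nz_preceq.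
by apply: eq_bigl => z; rewrite in_setT.
Qed.

Lemma comult_apply_sum (V : lmodType k) I (r : seq I)
    (H : I -> forall z y, dualC z y -> fam E V) x y (c : dualC x y) :
  comult_apply (fun z y c2 u v c1 => \sum_(i <- r) H i z y c2 u v c1) c
  = \sum_(i <- r) comult_apply (H i) c.
Proof.
rewrite comult_applyE; under [RHS]eq_bigr do rewrite comult_applyE.
rewrite [RHS]exchange_big; apply: eq_bigr => z _.
rewrite [RHS]exchange_big; apply: eq_bigr => i _.
rewrite [RHS]exchange_big; apply: eq_bigr => j _.
by rewrite scaler_sumr.
Qed.

Lemma comult_apply_prod (V : lmodType k) (phi : forall z y, Hom z y)
    (psi : forall y u v, Hom u v) (p : V) x y (c : dualC x y) :
  comult_apply (fun z y c2 u v c1 => (c2 (phi z y) : k) *: ((c1 (psi y u v) : k) *: p)) c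
  = (c (\sum_(z <- interval_enum x y) comp (phi z y) (psi y x z)) : k) *: p.
Proof.
rewrite comult_applyE linear_sum scaler_suml; apply: eq_bigr => z _.
exact: sum_dbasis_comp.
Qed.

Lemma sum_point_comp a b d (g : Hom b d) (f : Hom a b) x y :
  \sum_(z <- interval_enum x y) comp (point g z y) (point f x z) = point (comp g f) x y.
Proof.
have [->|g_neq0] := eqVneq g 0.
  by rewrite comp0l point0 big1 // => z _; rewrite point0 comp0l.
have [->|f_neq0] := eqVneq f 0.
  by rewrite comp0r point0 big1 // => z _; rewrite point0 comp0r.
have [<-|xa] := eqVneq a x; last first.
  rewrite point_other ?xa // big1 // => z _.
  by rewrite (@point_other _ _ _ _ f) ?comp0r ?xa.
have [<-|yd] := eqVneq d y; last first.
  rewrite point_other ?yd ?orbT // big1 // => z _.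
  by rewrite (@point_other _ _ _ _ g) ?comp0l ?yd ?orbT.
have b_in : b \in interval_enum a d.
  by apply: mem_interval_enum; apply: hom_nz_preceq; [exists f|exists g].
rewrite (bigD1_seq b) ?interval_enum_uniq //= !point_self big1 ?addr0 // => z zb.
by rewrite (@point_other _ _ _ _ g) ?comp0l // eq_sym zb.
Qed.

Lemma sum_point_idm x y :
  \sum_(z <- interval_enum x y) comp (point (idm E z) z y) (point (idm E y) x z)
  = point (idm E x) x y.
Proof.
have [<-|xy] := eqVneq x y.
  have x_in : x \in interval_enum x x by apply: mem_interval_enum; apply: preceq_refl.
  rewrite (bigD1_seq x) ?interval_enum_uniq //= !point_self comp1l big1 ?addr0 // => z zx.
  by rewrite (@point_other _ _ _ _ (idm E z)) ?comp0l // zx orbT.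
rewrite (@point_other _ _ _ _ (idm E x)) ?xy ?orbT // big1 // => z _.
have [->|zy] := eqVneq z y.
  by rewrite (@point_other _ _ _ _ (idm E y) x) ?comp0r // eq_sym xy.
by rewrite (@point_other _ _ _ _ (idm E z) z) ?comp0l // zy orbT.
Qed.

End LocallyFinite.

Section Contramodule.
Variables (k : fieldType) (E : klinCat k) (P : contramodule E).
Local Notation Obj := (@Defs.Obj k E).
Local Notation Hom := (@Defs.Hom k E).
Local Notation comp := (@Defs.comp k E).
Local Notation point := (@Defs.point k E).
Local Notation cpi := (@Defs.cpi k E P).
Local Notation cact := (@Defs.cact k E P).
Implicit Types (x y z u v : Obj) (F G : fam E P).

Lemma famext (V : lmodType k) (F G : fam E V) :
  (forall u v c, F u v c = G u v c) -> F = G.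
Proof.
move=> FG; apply: functional_extensionality_dep => u.
by apply: functional_extensionality_dep => v; apply: funext => c; exact: FG.
Qed.

Lemma lin_fam0 : lin_fam (fun u v (_ : dualC u v) => 0 : P).
Proof. by move=> u v a c1 c2; rewrite scaler0 addr0. Qed.

Lemma cpi0 : cpi (fun _ _ _ => 0) = 0.
Proof.
have := cpi_lin 1 lin_fam0 lin_fam0; rewrite scale1r => /eqP.
rewrite (_ : fam_lin _ _ _ = fun _ _ _ => 0); last first.
  by apply: famext => u v c; rewrite /fam_lin scaler0 addr0.
by rewrite -subr_eq subrr eq_sym => /eqP.
Qed.

Lemma cpi_add F G : lin_fam F -> lin_fam G ->
  cpi (fun u v c => F u v c + G u v c) = cpi F + cpi G.
Proof.
move=> linF linG; rewrite -[cpi F]scale1r -cpi_lin //; congr cpi.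
by apply: famext => u v c; rewrite /fam_lin scale1r.
Qed.

Lemma cpi_scale a F : lin_fam F -> cpi (fun u v c => a *: F u v c) = a *: cpi F.
Proof.
move=> linF; rewrite -[a *: _]addr0 -cpi0 -cpi_lin //; last exact: lin_fam0.
by congr cpi; apply: famext => u v c; rewrite /fam_lin addr0.
Qed.

Lemma cpi_sum I (r : seq I) (F : I -> fam E P) : (forall i, lin_fam (F i)) ->
  cpi (fun u v c => \sum_(i <- r) F i u v c) = \sum_(i <- r) cpi (F i).
Proof.
move=> linF; elim: r => [|i r IHr].
  by rewrite big_nil -[RHS]cpi0; congr cpi; apply: famext => u v c; rewrite big_nil.
have lin_sum : lin_fam (fun u v c => \sum_(j <- r) F j u v c).
  by move=> u v; apply: sum_linear_fun => j; apply: linF.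
by rewrite big_cons -IHr -cpi_add //; congr cpi; apply: famext => u v c; rewrite big_cons.
Qed.

Lemma cact_linear (phi : forall u v, Hom u v) : linear_fun (cact phi).
Proof.
move=> a p q; rewrite /Defs.cact -cpi_lin; try by move=> u v; apply: eval_linear_fun.
by congr cpi; apply: famext => u v c; rewrite /fam_lin scalerDr !scalerA mulrC.
Qed.

Lemma cact_point0 x y (p : P) : cact (point (0 : Hom x y)) p = 0.
Proof.
rewrite -cpi0; congr cpi; apply: famext => u v c.
by rewrite point0 linear0 scale0r.
Qed.

Hypothesis lfE : locally_finite E.

(* phi . (psi . p) = (phi psi) . p, where the right factor psi may depend on
   the target y of phi. *)
Lemma cact_assoc (phi : forall z y, Hom z y) (psi : forall y u v, Hom u v) (p : P) :
  cpi (fun z y c2 => (c2 (phi z y) : k) *: cact (psi y) p)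
  = cpi (fun x y c =>
      (c (\sum_(z <- interval_enum lfE x y) comp (phi z y) (psi y x z)) : k) *: p).
Proof.
pose f z y (c2 : dualC z y) : fam E P := fun u v c1 =>
  (c2 (phi z y) : k) *: ((c1 (psi y u v) : k) *: p).
have lin_f z y (c2 : dualC z y) : lin_fam (f z y c2).
  by move=> u v; apply: scale_linear_fun; apply: eval_linear_fun.
have f_lin z y a (c1 c2 : dualC z y) : f z y (a *: c1 + c2) = fam_lin a (f z y c1) (f z y c2).
  by apply: famext => u v c; rewrite /fam_lin /f eval_linear_fun.
rewrite (_ : (fun z y c2 => _) = fun z y c2 => cpi (f z y c2)).
  by rewrite cpi_comult //; congr cpi; apply: famext => x y c; rewrite comult_apply_prod.
by apply: famext => z y c2; rewrite cpi_scale //; move=> u v; apply: eval_linear_fun.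
Qed.

Lemma cact_comp a b d (g : Hom b d) (f : Hom a b) (p : P) :
  cact (point g) (cact (point f) p) = cact (point (comp g f)) p.
Proof.
rewrite {1}/Defs.cact (cact_assoc (fun z y => point g z y) (fun _ u v => point f u v)).
by congr cpi; apply: famext => x y c; rewrite sum_point_comp.
Qed.

Lemma cact_idm_eq0 (p : P) : (forall y, cact (point (idm E y)) p = 0) -> p = 0.
Proof.
move=> ep_eq0; rewrite -(cpi_counit p).
rewrite (_ : (fun u v c => _) = fun x y (c : dualC x y) => (c (\sum_(z <- interval_enum lfE x y)
    comp (point (idm E z) z y) (point (idm E y) x z)) : k) *: p); last first.
  by apply: famext => x y c; rewrite sum_point_idm.
rewrite -(cact_assoc (fun z y => point (idm E z) z y) (fun y u v => point (idm E y) u v)).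
by rewrite -cpi0; congr cpi; apply: famext => z y c; rewrite ep_eq0 scaler0.
Qed.

Lemma Theta_idm y (q : P) : Theta y q -> cact (point (idm E y)) q = q.
Proof. by move=> [q' ->]; rewrite cact_comp comp1l. Qed.

Lemma Theta_act_Theta x y (f : Hom x y) (p : P) : Theta y (Theta_act f p).
Proof. by exists (Theta_act f p); rewrite /Theta_act cact_comp comp1l. Qed.

Lemma Theta0 y : Theta y (0 : P).
Proof. by exists 0; rewrite (linear_fun0 (cact_linear _)). Qed.

Lemma ThetaD y a (p q : P) : Theta y p -> Theta y q -> Theta y (a *: p + q).
Proof. by move=> [p' ->] [q' ->]; exists (a *: p' + q'); rewrite cact_linear. Qed.

Lemma Theta_sum y I (r : seq I) (F : I -> P) :
  (forall i, Theta y (F i)) -> Theta y (\sum_(i <- r) F i).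
Proof.
move=> ThetaF; apply: (big_ind (Theta y)); [exact: Theta0| |by []].
by move=> p q Tp Tq; rewrite -[p]scale1r; apply: ThetaD.
Qed.

End Contramodule.

Section BelowSubmodule.
Variables (k : fieldType) (E : klinCat k) (P : contramodule E).
Local Notation Obj := (@Defs.Obj k E).
Local Notation Hom := (@Defs.Hom k E).
Local Notation comp := (@Defs.comp k E).
Local Notation point := (@Defs.point k E).
Local Notation cpi := (@Defs.cpi k E P).
Implicit Types x y z u v : Obj.
Hypothesis lfE : locally_finite E.

Record term y := Term { src : Obj; arr : Hom src y; elt : P }.

Definition tagged_of_term y (t : term y) : {x : Obj & (Hom x y * P)%type} :=
  Tagged (fun x => (Hom x y * P)%type) (arr t, elt t).

Definition term_of_tagged y (s : {x : Obj & (Hom x y * P)%type}) : term y :=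
  Term (tagged s).1 (tagged s).2.

Lemma tagged_of_termK y : cancel (@tagged_of_term y) (@term_of_tagged y).
Proof. by case. Qed.

HB.instance Definition _ y := Equality.copy (term y) (can_type (@tagged_of_termK y)).

Definition tval y (t : term y) : P := Theta_act (arr t) (elt t).

Definition tfam y (s : seq (term y)) : fam E P :=
  fun u v c => \sum_(t <- s) (c (point (arr t) u v) : k) *: elt t.

Lemma lin_tfam y (s : seq (term y)) : lin_fam (tfam s).
Proof. by move=> u v; apply: sum_linear_fun => t; apply: eval_linear_fun. Qed.

Lemma cpi_tfam y (s : seq (term y)) : cpi (tfam s) = \sum_(t <- s) tval t.
Proof. by apply: cpi_sum => t u v; apply: eval_linear_fun. Qed.

Definition from_below y (t : term y) : Prop := ~ preceq y (src t) /\ Theta (src t) (elt t).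

Definition Qbelow y (q : P) : Prop :=
  exists2 s : seq (term y), {in s, forall t, from_below t} & q = \sum_(t <- s) tval t.

Lemma Qbelow_Theta y (q : P) : Qbelow y q -> Theta y q.
Proof. by move=> [s _ ->]; apply: Theta_sum => t; apply: Theta_act_Theta. Qed.

Lemma Qbelow0 y : Qbelow y 0.
Proof. by exists [::]; rewrite ?big_nil. Qed.

Lemma QbelowD y a (p q : P) : Qbelow y p -> Qbelow y q -> Qbelow y (a *: p + q).
Proof.
move=> [s1 below1 ->] [s2 below2 ->].
exists ([seq Term (arr t) (a *: elt t) | t <- s1] ++ s2).
  move=> t' /[!mem_cat] /orP[/mapP[t t_in ->]|t'_in]; last exact: below2.
  have [not_above Tt] := below1 t t_in; split=> //=.
  by rewrite -[_ *: _]addr0; apply: ThetaD => //; apply: Theta0.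
rewrite big_cat big_map scaler_sumr; congr (_ + _); apply: eq_bigr => t _.
by rewrite /tval /Theta_act (linear_funZ (cact_linear _)).
Qed.

Lemma Qbelow_act x y (f : Hom x y) (p : P) : Qbelow x p -> Qbelow y (Theta_act f p).
Proof.
have [->|f_neq0] := eqVneq f 0; first by rewrite /Theta_act cact_point0 => _; apply: Qbelow0.
move=> [s below ->]; exists [seq Term (comp f (arr t)) (elt t) | t <- s].
  move=> t' /mapP[t t_in ->]; have [not_above Tt] := below t t_in; split=> //= y_below.
  by apply: not_above; apply: preceq_trans y_below; apply: hom_nz_preceq; exists f.
rewrite /Theta_act (linear_fun_sum (cact_linear _)) big_map.
by apply: eq_bigr => t _; rewrite cact_comp.
Qed.

Lemma Qbelow_submodule : is_submodule Qbelow.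
Proof.
split; first exact: Qbelow_Theta.
split; first exact: Qbelow0.
split; first exact: QbelowD.
exact: Qbelow_act.
Qed.

Lemma Qbelow_big : big_submodule Qbelow.
Proof.
move=> y; exists (interval_enum lfE y y) => x x_notin f p Tp.
have [->|f_neq0] := eqVneq f 0; first by rewrite /Theta_act cact_point0; apply: Qbelow0.
exists [:: Term f p]; last by rewrite big_seq1.
move=> t /[!inE] /eqP ->; split=> //= y_below; case/negP: x_notin.
by apply: mem_interval_enum => //; apply: hom_nz_preceq; exists f.
Qed.

End BelowSubmodule.

Section Nakayama.
Variables (k : fieldType) (E : klinCat k) (P : contramodule E).
Local Notation Obj := (@Defs.Obj k E).
Local Notation comp := (@Defs.comp k E).
Local Notation point := (@Defs.point k E).
Local Notation cpi := (@Defs.cpi k E P).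
Local Notation term := (@term k E P).
Implicit Types x y z u v : Obj.
Hypothesis lfE : locally_finite E.
Hypothesis Qbelow_full : forall y (q : P), Theta y q -> Qbelow y q.

Lemma exists_decomposition y (q : P) : exists s : seq (term y),
  Theta y q -> {in s, forall t, from_below t} /\ q = \sum_(t <- s) tval t.
Proof.
have [/Qbelow_full[s below ->]|not_Tq] := pselect (Theta y q); first by exists s.
by exists [::] => /not_Tq.
Qed.

Definition dec y (q : P) : seq (term y) := sval (cid (exists_decomposition y q)).

Lemma decP y (q : P) : Theta y q ->
  {in dec y q, forall t, from_below t} /\ q = \sum_(t <- dec y q) tval t.
Proof. exact: svalP (cid (exists_decomposition y q)). Qed.

Variables (y0 : Obj) (q0 : P).
Hypothesis Theta_q0 : Theta y0 q0.

Definition extend (t : term y0) (w : term (src t)) : term y0 :=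
  Term (comp (arr t) (arr w)) (elt w).

Definition refine (L : seq (term y0)) : seq (term y0) :=
  flatten [seq [seq extend w | w <- dec (src t) (elt t)] | t <- L].

Definition layer n : seq (term y0) := iter n refine [:: Term (idm E y0) q0].

Definition depth x := size (interval_enum lfE x y0).

Definition deep n (t : term y0) : Prop :=
  Theta (src t) (elt t) /\
  (arr t != 0 -> preceq (src t) y0 /\
     exists2 ch : seq Obj, uniq ch && (size ch == n.+1) &
       {in ch, forall w, preceq (src t) w /\ preceq w y0}).

Lemma layer_deep n : {in layer n, forall t, deep n t}.
Proof.
elim: n => [|n IHn] t /=.
  rewrite inE => /eqP ->; split=> // _; split; first exact: preceq_refl.
  by exists [:: y0] => // w /[!inE] /eqP ->; split; apply: preceq_refl.
move=> /flatten_mapP[t' /IHn[Tt' chain_t'] /mapP[w w_in ->]].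
have [not_above Tw] := (decP Tt').1 w w_in.
split=> //= arr_neq0.
have /chain_t'[t'_y0 [ch /andP[uniq_ch /eqP size_ch] ch_between]] : arr t' != 0.
  by apply: contraNneq arr_neq0 => ->; rewrite comp0l.
have w_t' : preceq (src w) (src t').
  apply: hom_nz_preceq; exists (arr w).
  by apply: contraNneq arr_neq0 => ->; rewrite comp0r.
split; first exact: preceq_trans w_t' t'_y0.
exists (src w :: ch).
  rewrite /= uniq_ch size_ch eqxx !andbT.
  by apply/negP => /ch_between[t'_w _]; apply: not_above.
move=> v /[!inE] /orP[/eqP ->|/ch_between[t'_v v_y0]].
  by split; [apply: preceq_refl|apply: preceq_trans w_t' t'_y0].
by split=> //; apply: preceq_trans w_t' t'_v.
Qed.

Lemma layer_far n t : t \in layer n -> (depth (src t) <= n)%N -> arr t = 0.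
Proof.
move=> t_in; apply: contraTeq => arr_neq0; rewrite -ltnNge.
have [_ /(_ arr_neq0)[_ [ch /andP[uniq_ch /eqP size_ch] ch_between]]] := layer_deep t_in.
rewrite -size_ch; apply: uniq_leq_size => // w /ch_between[].
exact: mem_interval_enum.
Qed.

Definition Fn n : fam E P := tfam (layer n).
Arguments Fn n _ _ _ : clear implicits.

Definition Gn n z y (c2 : dualC z y) : fam E P := fun u v c1 =>
  \sum_(t <- layer n) \sum_(w <- dec (src t) (elt t))
    (c2 (point (arr t) z y) : k) *: ((c1 (point (arr w) u v) : k) *: elt w).
Arguments Gn n z y c2 _ _ _ : clear implicits.

Lemma point_layer_far n t u v : t \in layer n -> (depth u <= n)%N -> point (arr t) u v = 0.
Proof.
move=> t_in; have [<- le_tn|ne _] := eqVneq (src t) u; last by rewrite point_other ?ne.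
by rewrite (layer_far t_in le_tn) point0.
Qed.

Lemma Fn_far n u v (c : dualC u v) : (depth u <= n)%N -> Fn n u v c = 0.
Proof.
move=> le_un; rewrite /Fn /tfam big_seq big1 // => t t_in.
by rewrite (point_layer_far _ t_in le_un) linear0 scale0r.
Qed.

Lemma Gn_far n z y (c2 : dualC z y) u v (c1 : dualC u v) :
  (depth z <= n)%N -> Gn n z y c2 u v c1 = 0.
Proof.
move=> le_zn; rewrite /Gn big_seq big1 // => t t_in; rewrite big1 // => w _.
by rewrite (point_layer_far _ t_in le_zn) linear0 scale0r.
Qed.

Lemma lin_Gn n z y (c2 : dualC z y) : lin_fam (Gn n z y c2).
Proof.
move=> u v; do 2![apply: sum_linear_fun => ?].
by apply: scale_linear_fun; apply: eval_linear_fun.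
Qed.

Lemma Gn_linear n z y u v (c1 : dualC u v) :
  linear_fun (fun c2 : dualC z y => Gn n z y c2 u v c1).
Proof. by do 2![apply: sum_linear_fun => ?]; apply: eval_linear_fun. Qed.

Lemma cpi_Gn n z y (c2 : dualC z y) : cpi (Gn n z y c2) = Fn n z y c2.
Proof.
rewrite cpi_sum; last first.
  move=> t u v; apply: sum_linear_fun => w.
  by apply: scale_linear_fun; apply: eval_linear_fun.
rewrite /Fn /tfam big_seq [RHS]big_seq; apply: eq_bigr => t t_in.
have [Tt _] := layer_deep t_in.
rewrite {2}(decP Tt).2 -cpi_tfam -cpi_scale; last exact: lin_tfam.
by congr cpi; apply: famext => u v c1; rewrite /tfam scaler_sumr.
Qed.

Lemma comult_Gn n x y (c : dualC x y) : comult_apply (Gn n) c = Fn n.+1 x y c.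
Proof.
rewrite /Gn (comult_apply_sum lfE) /Fn /tfam /= /refine big_flatten big_map.
apply: eq_bigr => t _; rewrite (comult_apply_sum lfE) big_map; apply: eq_bigr => w _.
rewrite (comult_apply_prod _ (fun z y => point (arr t) z y) (fun _ u v => point (arr w) u v)).
by rewrite sum_point_comp.
Qed.

(* Truncating at depth keeps all sums finite without changing their values,
   by Fn_far and Gn_far. *)
Definition G z y (c2 : dualC z y) : fam E P :=
  fun u v c1 => \sum_(0 <= n < depth z) Gn n z y c2 u v c1.
Arguments G z y c2 _ _ _ : clear implicits.

Definition Phi : fam E P := fun u v c => \sum_(0 <= n < depth u) Fn n u v c.
Arguments Phi _ _ _ : clear implicits.

Definition Psi : fam E P := fun u v c => \sum_(0 <= n < depth u) Fn n.+1 u v c.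
Arguments Psi _ _ _ : clear implicits.

Lemma Phi_split u v (c : dualC u v) : Phi u v c = Fn 0 u v c + Psi u v c.
Proof.
rewrite /Phi /Psi; case: (depth u) (fun n => @Fn_far n u v c) => [|m] Fu0.
  by rewrite !big_geq // Fu0 ?addr0.
by rewrite big_nat_recl // big_nat_recr //= [Fn m.+1 u v c]Fu0 // addr0.
Qed.

Lemma cpi_G z y (c2 : dualC z y) : cpi (G z y c2) = Phi z y c2.
Proof.
rewrite cpi_sum; last by move=> n; apply: lin_Gn.
by apply: eq_bigr => n _; rewrite cpi_Gn.
Qed.

Lemma comult_G x y (c : dualC x y) : comult_apply G c = Psi x y c.
Proof.
pose M := (depth x + \sum_(z <- interval_enum lfE x y) depth z)%N.
have le_zM z : z \in interval_enum lfE x y -> (depth z <= M)%N.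
  move=> z_in; rewrite /M (bigD1_seq z) ?interval_enum_uniq //=.
  by rewrite addnCA leq_addr.
transitivity (comult_apply (fun z y c2 u v c1 => \sum_(0 <= n < M) Gn n z y c2 u v c1) c).
  rewrite !comult_applyE big_seq [RHS]big_seq; apply: eq_bigr => z z_in.
  do 2![apply: eq_bigr => ? _]; congr (_ *: _).
  by rewrite /G; apply: (sum_nat_widen (le_zM z z_in)) => n; apply: Gn_far.
rewrite (comult_apply_sum lfE); under eq_bigr do rewrite comult_Gn.
symmetry; apply: sum_nat_widen (leq_addr _ _) _ => n le_xn.
by apply: Fn_far; apply: leq_trans le_xn _.
Qed.

Lemma Qbelow_full_Theta_eq0 : q0 = 0.
Proof.
have lin_Psi : lin_fam Psi.
  by move=> u v; apply: sum_linear_fun => n; apply: lin_tfam.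
have G_lin z y a (c1 c2 : dualC z y) : G z y (a *: c1 + c2) = fam_lin a (G z y c1) (G z y c2).
  apply: famext => u v c.
  have lin_G : linear_fun (fun c2 : dualC z y => G z y c2 u v c).
    by apply: sum_linear_fun => n; apply: Gn_linear.
  exact: lin_G.
have cpi_Phi : cpi Phi = cpi Psi.
  transitivity (cpi (fun z y c2 => cpi (G z y c2))).
    by congr cpi; apply: famext => z y c2; rewrite cpi_G.
  rewrite cpi_comult //; last by move=> z y c2 u v; apply: sum_linear_fun => n; apply: lin_Gn.
  by congr cpi; apply: famext => x y c; rewrite comult_G.
have : cpi Phi = cpi (Fn 0) + cpi Psi.
  rewrite -cpi_add //; last exact: lin_tfam.
  by congr cpi; apply: famext => u v c; rewrite Phi_split.
rewrite cpi_Phi -{1}[cpi Psi]add0r => /addIr.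
by rewrite /Fn cpi_tfam big_seq1 /tval /Theta_act /= Theta_idm.
Qed.

End Nakayama.

Theorem lemma4p11 (k : fieldType) (E : klinCat k) (P : contramodule E) :
  locally_finite E ->
  (exists p : P, p != 0) ->
  exists Q : Obj E -> P -> Prop,
    [/\ is_submodule Q, big_submodule Q & proper_submodule Q].
Proof.
move=> lfE [p p_neq0]; exists (@Qbelow _ _ P).
split; [exact: Qbelow_submodule | exact: Qbelow_big |].
apply: contrapT => not_proper.
have Qbelow_full y (q : P) : Theta y q -> Qbelow y q.
  by move=> Tq; apply: contrapT => not_Qq; apply: not_proper; exists y, q.
case/eqP: p_neq0; apply: (cact_idm_eq0 lfE) => y.
by apply: (Qbelow_full_Theta_eq0 lfE Qbelow_full); exists p.
Qed.
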